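(* (1) The map $I \mapsto \underline{M}(I)$ is a bijection between tropical ideals $I \subset \mathbb{B}[x_1^{\pm1},\dots,x_n^{\pm1}]$ and finitary matroids on $\mathbb{Z}^n$ that are invariant under the action of $\mathbb{Z}^n$ by translation. (2) Consequently, for every $d\ge 1$, the map $I \mapsto \mathcal{H}(\underline{M}(I))$ is a bijection between paving tropical ideals of degree $d+1$ in $\mathbb{B}[x_1^{\pm1},\dots,x_n^{\pm1}]$ and $d$-partitions of $\mathbb{Z}^n$ that are invariant under the action of $\mathbb{Z}^n$.
   Context: The Boolean semiring is $\mathbb{B}=\{\infty,0\}$ with addition $\oplus=\min$ and multiplication $+$. For $f=\bigoplus_{\mathbf u\in\mathbb{Z}^n} c_{\mathbf u}\mathbf x^{\mathbf u}\in\mathbb{B}[x_1^{\pm1},\dots,x_n^{\pm1}]$, $\operatorname{supp}(f)=\{\mathbf u: c_{\mathbf u}\neq\infty\}$. An ideal $I$ is a tropical ideal if for all $f,g\in I$ and $\mathbf u\in\operatorname{supp}(f)\cap\operatorname{supp}(g)$ there is $h\in I$ with $\operatorname{supp}(f)\,\Delta\,\operatorname{supp}(g)\subset\operatorname{supp}(h)\subset(\operatorname{supp}(f)\cup\operatorname{supp}(g))\setminus\{\mathbf u\}$. The underlying matroid $\underline{M}(I)$ is the finitary matroid on $\mathbb{Z}^n$ in which a set is independent iff it contains the support of no polynomial of $I$ (its circuits are the minimal supports of polynomials in $I$). A finitary matroid on a set $E$: nonempty collection of independent sets closed under subsets, satisfying augmentation, with a set independent whenever all its finite subsets are. A tropical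 ideal is zero-dimensional of degree $r$ iff $\underline{M}(I)$ has finite rank $r$ (equivalent to the Hilbert-polynomial definition). A zero-dimensional tropical ideal $I$ is a paving tropical ideal if $\underline{M}(I)$ is a paving matroid, i.e. all circuits have size $\deg(I)$ or $\deg(I)+1$. A hyperplane of a finite-rank matroid $M$ is a maximal subset of rank $\operatorname{rank}(M)-1$; $\mathcal{H}(M)$ is the set of hyperplanes. A $d$-partition of a set $E$ ($|E|\ge d+1$) is a collection $\mathcal P$ of subsets (blocks) with $|\mathcal P|\ge2$, every block of size $\ge d$, and every $d$-subset of $E$ contained in exactly one block. $\mathbb{Z}^n$ acts on subsets by $\mathbf u+S=\{\mathbf u+\mathbf v:\mathbf v\in S\}$, on collections by $\mathbf u+\mathcal P=\{\mathbf u+S:S\in\mathcal P\}$, and similarly on matroids on $\mathbb{Z}^n$; invariance means fixed by every $\mathbf u\in\mathbb{Z}^n$. *)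

From mathcomp Require Import all_boot all_order all_algebra.
From Stdlib Require Import ClassicalEpsilon.
Set Implicit Arguments.
Unset Strict Implicit.
Unset Printing Implicit Defensive.
Import GRing.Theory.
Local Open Scope ring_scope.

Definition Zn (n : nat) := 'rV[int]_n.
Definition zset (n : nat) := Zn n -> Prop.

Definition zsubset n (A B : zset n) := forall x, A x -> B x.
Definition seq_set n (s : seq (Zn n)) : zset n := fun x => x \in s.

Definition translate n (u : Zn n) (S : zset n) : zset n := fun x => S (x - u).

Definition has_card n (A : zset n) (k : nat) :=
  exists s : seq (Zn n), [/\ uniq s, size s = k & forall x, A x <-> x \in s].

Inductive Bsr := Binf | Bzero.
(* addition = min *)
Definition Badd (a b : Bsr) : Bsr :=
  match a, b with Binf, Binf => Binf | _, _ => Bzero end.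
(* multiplication = + *)
Definition Bmul (a b : Bsr) : Bsr :=
  match a, b with Bzero, Bzero => Bzero | _, _ => Binf end.

(* Laurent "polynomials": coefficient functions Z^n -> B with finite support *)
Definition Bcoef (n : nat) := Zn n -> Bsr.
Definition supp n (f : Bcoef n) : zset n := fun u => f u <> Binf.
Definition is_laurent n (f : Bcoef n) :=
  exists s : seq (Zn n), forall u, supp f u -> u \in s.
Definition pzero n : Bcoef n := fun _ => Binf.
Definition padd n (f g : Bcoef n) : Bcoef n := fun u => Badd (f u) (g u).
(* (f (.) g)_w = min_{u+v=w} (f_u + g_v); in B this is 0 iff some term is 0 *)
Definition pmul n (f g : Bcoef n) : Bcoef n := fun w =>
  if excluded_middle_informative
       (exists u v, u + v = w /\ Bmul (f u) (g v) = Bzero)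
  then Bzero else Binf.

Definition is_ideal n (I : Bcoef n -> Prop) :=
  [/\ forall f, I f -> is_laurent f,
      I (@pzero n),
      forall f g, I f -> I g -> I (padd f g)
    & forall f g, I f -> is_laurent g -> I (pmul g f)].

Definition is_tropical_ideal n (I : Bcoef n -> Prop) :=
  is_ideal I /\
  forall f g u, I f -> I g -> supp f u -> supp g u ->
    exists h, [/\ I h,
      (forall v, (supp f v /\ ~ supp g v) \/ (supp g v /\ ~ supp f v) -> supp h v)
    & (forall v, supp h v -> (supp f v \/ supp g v) /\ v <> u)].

(* A matroid is given by its predicate of independent sets. *)
Definition is_finitary_matroid n (M : zset n -> Prop) :=
  [/\ exists A, M A,
      forall A B, zsubset A B -> M B -> M A,
      forall s t : seq (Zn n), uniq s -> uniq t ->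
        M (seq_set s) -> M (seq_set t) -> (size s < size t)%N ->
        exists x, [/\ x \in t, x \notin s & M (seq_set (x :: s))]
    &
      forall A, (forall s, zsubset (seq_set s) A -> M (seq_set s)) -> M A].

Definition zinvariant n (P : zset n -> Prop) :=
  forall (u : Zn n) (A : zset n), P (translate u A) <-> P A.

Definition underM n (I : Bcoef n -> Prop) : zset n -> Prop := fun A =>
  forall f, I f -> (exists u, supp f u) -> ~ zsubset (supp f) A.

Definition rank_of n (M : zset n -> Prop) (A : zset n) (k : nat) :=
  (exists s : seq (Zn n), [/\ uniq s, size s = k, zsubset (seq_set s) A & M (seq_set s)])
  /\ forall s : seq (Zn n), uniq s -> zsubset (seq_set s) A -> M (seq_set s) ->
       (size s <= k)%N.

Definition matroid_rank n (M : zset n -> Prop) (r : nat) :=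
  rank_of M (fun _ => True) r.

Definition is_circuit n (M : zset n -> Prop) (C : zset n) :=
  ~ M C /\ forall D, zsubset D C -> ~ M D -> zsubset C D.

Definition zero_dim_tropical n (I : Bcoef n -> Prop) (r : nat) :=
  is_tropical_ideal I /\ matroid_rank (underM I) r.

Definition paving_tropical_ideal n (I : Bcoef n -> Prop) (r : nat) :=
  zero_dim_tropical I r /\
  forall C, is_circuit (underM I) C -> has_card C r \/ has_card C r.+1.

Definition hyperplanes n (M : zset n -> Prop) : zset n -> Prop := fun H =>
  exists r, matroid_rank M r /\
    (rank_of M H r.-1 /\
     forall H', zsubset H H' -> rank_of M H' r.-1 -> zsubset H' H).

Definition d_partition n (d : nat) (P : zset n -> Prop) :=
  [/\ exists s : seq (Zn n), uniq s /\ size s = d.+1,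
      exists B1 B2, [/\ P B1, P B2 & B1 <> B2],
      forall B, P B -> exists s : seq (Zn n),
                  [/\ uniq s, size s = d & zsubset (seq_set s) B]
    & forall s : seq (Zn n), uniq s -> size s = d ->
        exists B, [/\ P B, zsubset (seq_set s) B &
                   forall B', P B' -> zsubset (seq_set s) B' -> B' = B]].

Set Warnings "-notation-overridden,-ambiguous-paths,-notation-incompatible-prefix".
From mathcomp Require Import all_boot all_order all_algebra.
From Stdlib Require Import ClassicalEpsilon Classical FunctionalExtensionality PropExtensionality.
Set Implicit Arguments. Unset Strict Implicit. Unset Printing Implicit Defensive.
Import GRing.Theory.

(* For a tropical ideal I, augmentation of underM I follows from
   the elimination axiom by an exchange argument (trop_aug), finitarity from
   finiteness of supports, and invariance from multiplication by monomials.
   Conversely, for a finitary matroid M let circuit_ideal M be the Laurent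
   polynomials whose support is a union of circuits; strong circuit
   elimination (strong_elim) makes it a tropical ideal when M is invariant,
   and underM (circuit_ideal M) = M.  Finally every tropical ideal is the
   circuit ideal of its matroid, because minimal supports of I are exactly
   the circuits of underM I and a polynomial over B is the sum of the
   polynomials covering its support (trop_circuit_ideal).

   In a paving matroid of rank d+1 every d-set is independent and
   its closure is the unique hyperplane through it, so the hyperplanes form a
   d-partition (paving_dpart); the matroid is recovered from its hyperplanes
   as block_matroid (pav_char).  Conversely, for a d-partition P the block
   matroid is a paving matroid of rank d+1 whose hyperplanes are the blocks. *)

Lemma zset_ext n (A B : zset n) : (forall x, A x <-> B x) -> A = B.
Proof.
by move=> AB; apply: functional_extensionality => x; apply: propositional_extensionality.
Qed.

Lemma seq_set_eq n (s t : seq (Zn n)) : s =i t -> seq_set s = seq_set t.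
Proof. by move=> st; apply: zset_ext => x; rewrite /seq_set st. Qed.

Lemma seq_set_cons_sub n (x : Zn n) (s : seq (Zn n)) (A : zset n) :
  A x -> zsubset (seq_set s) A -> zsubset (seq_set (x :: s)) A.
Proof. by move=> Ax sA y; rewrite /seq_set inE => /predU1P [->|/sA]. Qed.

Lemma exists_notin n (s t : seq (Zn n)) : uniq t -> (size s < size t)%N ->
  exists x, x \in t /\ x \notin s.
Proof.
move=> ut lt; apply: NNPP => none; suff /(uniq_leq_size ut) : {subset t <= s}.
  by rewrite leqNgt lt.
by move=> x xt; apply: NNPP => /negP xs; apply: none; exists x.
Qed.

Lemma count_lt (T : eqType) (p q : pred T) (s : seq T) e :
  {in s, subpred q p} -> e \in s -> p e -> ~~ q e -> (count q s < count p s)%N.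
Proof.
elim: s => //= y s IH qp; rewrite inE.
have qp' : {in s, subpred q p} by move=> x xs; apply: qp; rewrite inE xs orbT.
have le_y : (q y <= p y)%N by case qy: (q y); rewrite // (qp y) // inE eqxx.
case/predU1P => [<-|es] pe qe; last by rewrite -addnS leq_add // IH.
rewrite (negbTE qe) pe add1n ltnS.
have -> : count q s = count (predI q p) s.
  by apply: eq_in_count => x xs /=; case qx: (q x); rewrite // (qp' x).
by apply: sub_count => x /andP [].
Qed.

Local Open Scope ring_scope.

Lemma translateK n (u : Zn n) (A : zset n) : translate (- u) (translate u A) = A.
Proof. by apply: zset_ext => x; rewrite /translate opprK addrK. Qed.

Lemma translate_sub n (u : Zn n) (A B : zset n) :
  zsubset A B -> zsubset (translate u A) (translate u B).
Proof. by move=> AB x; apply: AB. Qed.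

Lemma zinv_of n (P : zset n -> Prop) :
  (forall u A, P A -> P (translate u A)) -> zinvariant P.
Proof. by move=> PT u A; split=> [/(PT (- u))|]; rewrite ?translateK //; apply: PT. Qed.

Lemma seq_set_translate n (u : Zn n) (s : seq (Zn n)) :
  seq_set [seq x + u | x <- s] = translate u (seq_set s).
Proof.
apply: zset_ext => x; rewrite /translate /seq_set; split.
  by case/mapP => y ys ->; rewrite addrK.
by move=> xs; apply/mapP; exists (x - u); rewrite ?subrK.
Qed.

Lemma uniq_translate n (u : Zn n) (s : seq (Zn n)) : uniq [seq x + u | x <- s] = uniq s.
Proof. by apply: map_inj_uniq; apply: (can_inj (addrK u)). Qed.

Local Close Scope ring_scope.

Section FinitaryMatroid.
Variables (n : nat) (M : zset n -> Prop).
Hypothesis HM : is_finitary_matroid M.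

Lemma fm_sub (A B : zset n) : zsubset A B -> M B -> M A.
Proof. by case: HM => _ sub _ _; apply: sub. Qed.

Lemma fm_subs (s t : seq (Zn n)) : {subset s <= t} -> M (seq_set t) -> M (seq_set s).
Proof. by move=> st; apply: fm_sub => x; apply: st. Qed.

Lemma fm_empty : M (seq_set [::]).
Proof. by case: HM => [[A MA] _ _ _]; apply: fm_sub MA. Qed.

Lemma fm_aug (s t : seq (Zn n)) :
  uniq s -> uniq t -> M (seq_set s) -> M (seq_set t) -> (size s < size t)%N ->
  exists x, [/\ x \in t, x \notin s & M (seq_set (x :: s))].
Proof. by case: HM => _ _ aug _; apply: aug. Qed.

Lemma fm_finite_dep (A : zset n) : ~ M A ->
  exists s : seq (Zn n), zsubset (seq_set s) A /\ ~ M (seq_set s).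
Proof.
case: HM => _ _ _ fin depA; apply: NNPP => none; apply: depA; apply: fin => s sA.
by apply: NNPP => Ms; apply: none; exists s.
Qed.

Lemma circuit_dep (C : zset n) : is_circuit M C -> ~ M C.
Proof. by case. Qed.

Lemma dep_circuit (s : seq (Zn n)) : ~ M (seq_set s) ->
  exists c, [/\ uniq c, {subset c <= s} & is_circuit M (seq_set c)].
Proof.
move=> dep_s; have dep_u : ~ M (seq_set (undup s)) by rewrite (seq_set_eq (mem_undup s)).
suff: forall t, {subset t <= s} -> uniq t -> ~ M (seq_set t) ->
    exists c, [/\ uniq c, {subset c <= s} & is_circuit M (seq_set c)].
  by move/(_ (undup s)); apply=> // [x|]; rewrite ?mem_undup ?undup_uniq.
move=> t; have [k] := ubnP (size t); elim: k t => // k IH t lt_k ts ut dep_t.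
case: (classic (exists x, x \in t /\ ~ M (seq_set (rem x t)))) => [[x [xt dep_x]]|indep].
  apply: (IH (rem x t)) dep_x; last exact: rem_uniq.
    by rewrite size_rem // -ltnS prednK //; case: (t) xt.
  by move=> y /mem_rem /ts.
exists t; split => //.
split=> // D Dt dep_D x xt; apply: NNPP => Dx; apply: dep_D.
apply: fm_sub (_ : M (seq_set (rem x t))).
  move=> y Dy; rewrite /seq_set (mem_rem_uniq _ ut) inE (Dt y Dy) andbT.
  by apply/eqP => yx; apply: Dx; rewrite -yx.
by apply: NNPP => dep_x; apply: indep; exists x.
Qed.

Lemma circuit_seq (C : zset n) : is_circuit M C -> exists c, uniq c /\ C = seq_set c.
Proof.
move=> [depC minC]; have [s [sC dep_s]] := fm_finite_dep depC.
have Cs := minC _ sC dep_s; exists (undup s); split; first exact: undup_uniq.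
by apply: zset_ext => x; rewrite /seq_set mem_undup; split; [apply: Cs | apply: sC].
Qed.

Lemma circuit_rem (c : seq (Zn n)) x : uniq c ->
  is_circuit M (seq_set c) -> x \in c -> M (seq_set (rem x c)).
Proof.
move=> uc [_ minC] xc; apply: NNPP => dep.
have /(_ x xc) : zsubset (seq_set c) (seq_set (rem x c)).
  by apply: minC dep => y /mem_rem.
by rewrite /seq_set mem_rem_uniqF.
Qed.

Lemma circuit_in v (B : seq (Zn n)) : M (seq_set B) -> ~ M (seq_set (v :: B)) ->
  exists c, [/\ uniq c, {subset c <= v :: B}, v \in c & is_circuit M (seq_set c)].
Proof.
move=> MB dep; have [c [uc cvB Cc]] := dep_circuit dep.
exists c; split => //; apply: NNPP => /negP vc; apply: (circuit_dep Cc).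
apply: fm_subs MB => x xc; move: (cvB _ xc); rewrite inE => /predU1P [xv|//].
by move: vc; rewrite -xv xc.
Qed.

Definition maxind (X B : seq (Zn n)) :=
  [/\ uniq B, {subset B <= X}, M (seq_set B) &
      forall x, x \in X -> x \notin B -> ~ M (seq_set (x :: B))].

Lemma ext_max (X A : seq (Zn n)) :
  uniq A -> {subset A <= X} -> M (seq_set A) -> exists B, {subset A <= B} /\ maxind X B.
Proof.
suff ext : forall L (A : seq (Zn n)), uniq A -> M (seq_set A) -> exists B,
  [/\ uniq B, {subset A <= B}, {subset B <= A ++ L}, M (seq_set B) &
      forall x, x \in L -> x \notin B -> ~ M (seq_set (x :: B))].
  move=> uA AX MA; have [B [uB AB BAX MB maxB]] := ext X A uA MA.
  by exists B; split => //; split => // x /BAX; rewrite mem_cat => /orP [/AX|].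
elim=> [|y L IH] {}A uA MA; first by exists A; split => // x; rewrite cats0.
case: (classic (y \notin A /\ M (seq_set (y :: A)))) => [[yA MyA]|no_y].
  have [|B [uB AB BL MB maxB]] := IH (y :: A) _ MyA; first by rewrite /= yA uA.
  exists B; split => //.
  - by move=> x xA; apply: AB; rewrite inE xA orbT.
  - by move=> x /BL; rewrite !mem_cat !inE => /orP [/orP [] ->|->]; rewrite ?orbT.
  - by move=> x; rewrite inE => /predU1P [->|]; [rewrite AB ?mem_head|apply: maxB].
have [B [uB AB BL MB maxB]] := IH A uA MA; exists B; split => //.
- by move=> x /BL; rewrite !mem_cat inE => /orP [] ->; rewrite ?orbT.
- move=> x; rewrite inE => /predU1P [-> yB MyB|]; last exact: maxB.
  apply: no_y; split; first by apply: contra yB; apply: AB.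
  by apply: fm_subs MyB => z; rewrite !inE => /predU1P [->|/AB ->]; rewrite ?eqxx ?orbT.
Qed.

Lemma maxind_size (X B1 B2 : seq (Zn n)) : maxind X B1 -> maxind X B2 -> size B1 = size B2.
Proof.
suff no_lt : forall B1 B2, maxind X B1 -> maxind X B2 -> ~ (size B1 < size B2)%N.
  move=> h1 h2; case: (ltngtP (size B1) (size B2)) => // lt.
    by case: (no_lt _ _ h1 h2).
  by case: (no_lt _ _ h2 h1).
move=> {}B1 {}B2 [u1 _ M1 max1] [u2 sub2 M2 _] lt.
have [x [xB2 xB1 Mx]] := fm_aug u1 u2 M1 M2 lt.
exact: max1 x (sub2 _ xB2) xB1 Mx.
Qed.

Lemma ind_le_max (X A B : seq (Zn n)) :
  uniq A -> {subset A <= X} -> M (seq_set A) -> maxind X B -> (size A <= size B)%N.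
Proof.
move=> uA AX MA maxB; have [B' [AB' maxB']] := ext_max uA AX MA.
by rewrite -(maxind_size maxB' maxB); apply: uniq_leq_size.
Qed.

Lemma circuit_absorb (c X : seq (Zn n)) x : uniq c -> is_circuit M (seq_set c) ->
  x \in c -> {subset rem x c <= X} -> exists B, maxind X B /\ maxind (x :: X) B.
Proof.
move=> uc Cc xc cX; have [B [cB [uB BX MB maxB]]] :=
  ext_max (rem_uniq x uc) cX (circuit_rem uc Cc xc).
exists B; split => //; split => //; first by move=> y /BX yX; rewrite inE yX orbT.
move=> y; rewrite inE => /predU1P [-> _ MxB|]; last exact: maxB.
apply: (circuit_dep Cc); apply: fm_subs MxB => z zc; rewrite inE.
by case: (eqVneq z x) => //= zx; apply: cB; rewrite (mem_rem_uniq _ uc) inE zx.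
Qed.

Lemma strong_elim (c1 c2 : seq (Zn n)) u v :
  uniq c1 -> uniq c2 -> is_circuit M (seq_set c1) -> is_circuit M (seq_set c2) ->
  u \in c1 -> u \in c2 -> v \in c1 -> v \notin c2 ->
  exists c, [/\ uniq c, is_circuit M (seq_set c), v \in c &
     forall x, x \in c -> (x \in c1 \/ x \in c2) /\ x <> u].
Proof.
move=> u1 u2 C1 C2 uc1 uc2 vc1 vc2.
(* u is spanned by Y = (c1 u c2) - {u, v} via c2, and v by u :: Y via c1, so
   Y, u :: Y and v :: u :: Y have bases of the same size; hence adding v to a
   basis of Y creates a dependence, whose circuit is the one we want. *)
pose Y := [seq x <- c1 ++ c2 | (x != u) && (x != v)].
have memY x : (x \in Y) = [&& x != u, x != v & x \in c1 ++ c2] by rewrite mem_filter andbA.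
have [B [maxY maxuY]] : exists B, maxind Y B /\ maxind (u :: Y) B.
  apply: (circuit_absorb u2 C2 uc2) => x; rewrite (mem_rem_uniq _ u2) inE memY mem_cat.
  by case/andP => -> xc2; rewrite xc2 orbT andbT; apply: contraNneq vc2 => <-.
have [B' [maxuY' maxvuY']] : exists B', maxind (u :: Y) B' /\ maxind (v :: u :: Y) B'.
  apply: (circuit_absorb u1 C1 vc1) => x; rewrite (mem_rem_uniq _ u1) !inE memY mem_cat.
  by case/andP => -> ->; case: (x == u).
have [uB BY MB _] := maxY.
have vB : v \notin B by apply/negP => /BY; rewrite memY eqxx andbF.
have dep_vB : ~ M (seq_set (v :: B)).
  move=> MvB; have uvB : uniq (v :: B) by rewrite /= vB uB.
  have vBY : {subset v :: B <= v :: u :: Y}.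
    by move=> x; rewrite !inE => /predU1P [->|/BY ->]; rewrite ?eqxx ?orbT.
  have := ind_le_max uvB vBY MvB maxvuY'.
  by rewrite -(maxind_size maxuY maxuY') ltnn.
have [c [uc cvB vc Cc]] := circuit_in MB dep_vB.
exists c; split => // x /cvB; rewrite inE => /predU1P [->|/BY].
  by split; [left | apply/eqP; rewrite eq_sym (memPn vc2)].
by rewrite memY mem_cat => /and3P [/eqP xu _ /orP c12]; split => //; case: c12; tauto.
Qed.

End FinitaryMatroid.

Local Open Scope ring_scope.

Lemma Bcoef_ext n (f g : Bcoef n) : (forall u, supp f u <-> supp g u) -> f = g.
Proof.
move=> fg; apply: functional_extensionality => u; have := fg u; rewrite /supp.
by case: (f u); case: (g u) => // -[fg' gf]; [case: gf | case: fg'].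
Qed.

Lemma supp_padd n (f g : Bcoef n) u : supp (padd f g) u <-> supp f u \/ supp g u.
Proof. by rewrite /supp /padd; case: (f u); case: (g u); intuition. Qed.

Lemma supp_pmul n (g f : Bcoef n) w :
  supp (pmul g f) w <-> exists a b, [/\ a + b = w, supp g a & supp f b].
Proof.
rewrite /supp /pmul; case: excluded_middle_informative => [[a [b [ab gf]]]|no_ab].
  by split=> // _; exists a, b; split => //; move: gf; rewrite /Bmul; case: (g a); case: (f b).
split=> [[]//|[a [b [ab ga fb]]] _]; apply: no_ab; exists a, b; split => //.
by move: ga fb; rewrite /Bmul; case: (g a); case: (f b).
Qed.

Definition indicator n (P : zset n) : Bcoef n :=
  fun v => if excluded_middle_informative (P v) then Bzero else Binf.

Lemma supp_indicator n (P : zset n) v : supp (indicator P) v <-> P v.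
Proof. by rewrite /supp /indicator; case: excluded_middle_informative. Qed.

Lemma laurent_seq n (f : Bcoef n) : is_laurent f ->
  exists s : seq (Zn n), uniq s /\ forall u, supp f u <-> u \in s.
Proof.
case=> s fs; pose in_supp x := if f x is Bzero then true else false.
have in_suppE x : in_supp x <-> supp f x by rewrite /in_supp /supp; case: (f x).
exists (undup (filter in_supp s)); split; first exact: undup_uniq.
move=> u; rewrite mem_undup mem_filter -in_suppE.
by split => [fu|/andP [] //]; rewrite fu fs // -in_suppE.
Qed.

Definition monomial n (a : Zn n) : Bcoef n := indicator (fun w => w = a).

Lemma supp_monomial n (a w : Zn n) : supp (monomial a) w <-> w = a.
Proof. exact: supp_indicator. Qed.

Lemma monomial_laurent n (a : Zn n) : is_laurent (monomial a).
Proof. by exists [:: a] => u /supp_monomial ->; rewrite mem_head. Qed.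

Lemma supp_monomial_mul n (a : Zn n) (f : Bcoef n) w :
  supp (pmul (monomial a) f) w <-> supp f (w - a).
Proof.
rewrite supp_pmul; split => [[a' [b [<- /supp_monomial -> fb]]]|fw].
  by rewrite addrC addKr.
by exists a, (w - a); split => //; [rewrite addrC subrK | apply/supp_monomial].
Qed.

Section TropicalMatroid.
Variables (n : nat) (I : Bcoef n -> Prop).

Lemma dependent_witness (A : zset n) : ~ underM I A ->
  exists f, [/\ I f, exists u, supp f u & zsubset (supp f) A].
Proof. by move=> depA; apply: NNPP => none; apply: depA => f If ne fA; apply: none; exists f. Qed.

Lemma underM_sub (A B : zset n) : zsubset A B -> underM I B -> underM I A.
Proof. by move=> AB MB f If ne fA; apply: (MB f If ne) => x /fA /AB. Qed.

Hypothesis HI : is_tropical_ideal I.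

Lemma trop_laurent f : I f -> is_laurent f.
Proof. by case: HI => -[laur _ _ _] _; apply: laur. Qed.

Lemma trop_elim f g u : I f -> I g -> supp f u -> supp g u ->
  exists h, [/\ I h,
    (forall v, (supp f v /\ ~ supp g v) \/ (supp g v /\ ~ supp f v) -> supp h v)
  & (forall v, supp h v -> (supp f v \/ supp g v) /\ v <> u)].
Proof. by case: HI => _; apply. Qed.

Lemma dependent_through e (t t' : seq (Zn n)) : underM I (seq_set t) ->
  {subset t' <= t} -> ~ underM I (seq_set (e :: t')) ->
  exists p, [/\ I p, supp p e & zsubset (supp p) (seq_set (e :: t'))].
Proof.
move=> indep_t t't /dependent_witness [p [Ip ne pet]]; exists p; split => //.
apply: NNPP => pe; apply: (indep_t p Ip ne) => x px.
by move: (pet x px); rewrite /seq_set inE => /predU1P [xe|/t't //]; case: pe; rewrite -xe.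
Qed.

Lemma exchange_contra e g (t : seq (Zn n)) p1 p2 : uniq t -> e \notin t -> g \in t ->
  underM I (seq_set t) -> I p1 -> I p2 -> supp p1 e -> supp p2 e -> supp p1 g ->
  zsubset (supp p1) (seq_set (e :: t)) -> zsubset (supp p2) (seq_set (e :: rem g t)) ->
  False.
Proof.
move=> ut et gt indep_t Ip1 Ip2 p1e p2e p1g p1t p2t.
have [h [Ih h_sym h_sub]] := trop_elim Ip1 Ip2 p1e p2e.
have p2g : ~ supp p2 g.
  move=> /p2t; rewrite /seq_set inE mem_rem_uniqF // orbF => /eqP ge.
  by move: et; rewrite -ge gt.
apply: (indep_t h Ih); first by exists g; apply: h_sym; left.
move=> x /h_sub [[/p1t|/p2t] xet xe]; move: xet; rewrite /seq_set inE => /predU1P [//|] //.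
exact: mem_rem.
Qed.

(* Augmentation for underM I, by induction on the number of points of s
   outside t, using the exchange argument above. *)
Lemma trop_aug (s t : seq (Zn n)) :
  uniq s -> uniq t -> underM I (seq_set s) -> underM I (seq_set t) -> (size s < size t)%N ->
  exists x, [/\ x \in t, x \notin s & underM I (seq_set (x :: s))].
Proof.
have [k] := ubnP (count (fun x => x \notin t) s).
elim: k s t => // k IH s t lt_k us ut indep_s indep_t lt.
have [f [ft fs]] := exists_notin ut lt.
have [st|/allPn [e es et]] := boolP (all (mem t) s).
  exists f; split => //; apply: underM_sub indep_t.
  by apply: seq_set_cons_sub => // y ys; apply: (allP st).
apply: NNPP => no_aug.
have dep_swap : forall f, f \in t -> f \notin s -> ~ underM I (seq_set (e :: rem f t)).
  move=> {}f {}ft {}fs indep_swap.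
  have ut' : uniq (e :: rem f t) by rewrite /= rem_uniq // andbT; apply: contra et; apply: mem_rem.
  have sz : size (e :: rem f t) = size t by rewrite /= size_rem // prednK //; case: (t) ft.
  have cnt : (count (fun x => x \notin e :: rem f t) s < k)%N.
    rewrite -ltnS; apply: leq_trans lt_k.
    apply: (count_lt (e := e)) => //; last by rewrite mem_head.
    move=> x xs; rewrite !inE (mem_rem_uniq _ ut) inE negb_or negb_and negbK.
    by case/andP => _ /predU1P [xf|//]; move: fs; rewrite -xf xs.
  have [|x [xt' xs aug]] := IH s _ cnt us ut' indep_s indep_swap; first by rewrite sz.
  move: xt'; rewrite inE => /predU1P [xe|/mem_rem xt]; first by move: xs; rewrite xe es.
  by apply: no_aug; exists x.
have rem_sub x : {subset rem x t <= t} by move=> y /mem_rem.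
have [p1 [Ip1 p1e p1t]] := dependent_through indep_t (rem_sub f) (dep_swap f ft fs).
have [g [p1g gt gs]] : exists g, [/\ supp p1 g, g \in t & g \notin s].
  apply: NNPP => none; apply: (indep_s p1 Ip1); first by exists e.
  move=> x p1x; move: (p1t x p1x); rewrite /seq_set inE => /predU1P [->//|/mem_rem xt].
  by apply: NNPP => /negP xs; apply: none; exists x.
have [p2 [Ip2 p2e p2t]] := dependent_through indep_t (rem_sub g) (dep_swap g gt gs).
apply: (exchange_contra ut et gt indep_t Ip1 Ip2 p1e p2e p1g _ p2t).
by move=> x /p1t; rewrite /seq_set !inE => /predU1P [->|/mem_rem ->]; rewrite ?eqxx ?orbT.
Qed.

Lemma trop_matroid : is_finitary_matroid (underM I).
Proof.
split.
- by exists (fun _ => False) => f If [u fu] sub; apply: (sub u fu).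
- by move=> A B; apply: underM_sub.
- exact: trop_aug.
- move=> A finA f If ne fA; have [s [us fs]] := laurent_seq (trop_laurent If).
  by apply: (finA s _ f If ne) => x /fs; [apply: fA|].
Qed.

(* Translating by u corresponds to multiplying by the monomial x^u. *)
Lemma trop_inv : zinvariant (underM I).
Proof.
case: HI => -[_ _ _ mulI] _; apply: zinv_of => u A indepA f If [x fx] fuA.
apply: (indepA (pmul (monomial (- u)) f)).
- exact: mulI If (monomial_laurent _).
- by exists (x - u); apply/supp_monomial_mul; rewrite opprK subrK.
- by move=> w /supp_monomial_mul; rewrite opprK => /fuA; rewrite /translate addrK.
Qed.

End TropicalMatroid.

(* The circuit ideal of M: Laurent polynomials whose support is a union of
   circuits of M.  It is the inverse of I |-> underM I. *)
Definition circuit_ideal n (M : zset n -> Prop) (f : Bcoef n) :=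
  is_laurent f /\
  forall u, supp f u -> exists C, [/\ is_circuit M C, C u & zsubset C (supp f)].

Definition minimal_in n (I : Bcoef n -> Prop) (g : Bcoef n) :=
  forall g', I g' -> (exists v, supp g' v) -> zsubset (supp g') (supp g) ->
  zsubset (supp g) (supp g').

(* Over B, a polynomial is the sum of any polynomials of I covering its
   support from inside, so it lies in I. *)
Lemma ideal_cover n (I : Bcoef n -> Prop) (f : Bcoef n) : is_ideal I -> is_laurent f ->
  (forall u, supp f u -> exists g, [/\ I g, supp g u & zsubset (supp g) (supp f)]) -> I f.
Proof.
case=> _ I0 addI _ /laurent_seq [s [_ fs]] cover.
suff [F [IF Ff fF]] : exists F, [/\ I F, zsubset (supp F) (supp f) &
    forall v, v \in s -> supp f v -> supp F v].
  suff -> : f = F by [].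
  by apply: Bcoef_ext => v; split => [fv|/Ff //]; apply: fF => //; apply/fs.
elim: (s) => [|x s' [F [IF Ff fF]]]; first by exists (@pzero n); split.
case: (classic (supp f x)) => [fx|nfx].
  have [g [Ig gx gf]] := cover x fx; exists (padd g F); split; first exact: addI.
    by move=> v /supp_padd [/gf|/Ff].
  by move=> v; rewrite inE => /predU1P [-> _|vs fv]; apply/supp_padd; [left | right; apply: fF].
by exists F; split => // v; rewrite inE => /predU1P [-> //|]; apply: fF.
Qed.

Section TropicalIdealCircuits.
Variables (n : nat) (I : Bcoef n -> Prop).
Hypothesis HI : is_tropical_ideal I.

Lemma shrink_support f u : I f -> supp f u -> ~ minimal_in I f ->
  exists h w, [/\ I h, supp h u, zsubset (supp h) (supp f), supp f w & ~ supp h w].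
Proof.
move=> If fu not_min.
have [g [Ig [v gv] gf [w fw gw]]] : exists g, [/\ I g, exists v, supp g v,
    zsubset (supp g) (supp f) & exists2 w, supp f w & ~ supp g w].
  apply: NNPP => none; apply: not_min => g Ig ne gf x fx; apply: NNPP => gx.
  by apply: none; exists g; split => //; exists x.
case: (classic (supp g u)) => [gu|gu]; first by exists g, w.
have [h [Ih h_sym h_sub]] := trop_elim HI If Ig (gf v gv) gv.
exists h, v; split => //.
- by apply: h_sym; left.
- by move=> x /h_sub [[fx|/gf fx] _].
- exact: gf.
- by move=> /h_sub [_ /(_ erefl)].
Qed.

Lemma trop_min f u : I f -> supp f u ->
  exists g, [/\ I g, supp g u, zsubset (supp g) (supp f) & minimal_in I g].
Proof.
move=> If fu; have [s [us fs]] := laurent_seq (trop_laurent HI If).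
have {fs}fs : forall v, supp f v -> v \in s by move=> v /fs.
have [k] := ubnP (size s); elim: k s f fu If fs us => // k IH s f fu If fs us lt_k.
case: (classic (minimal_in I f)) => [fmin|not_min]; first by exists f; split.
have [h [w [Ih hu hf fw hw]]] := shrink_support If fu not_min.
have [||g [Ig gu gh gmin]] := IH (rem w s) h hu Ih _ (rem_uniq w us).
- move=> x hx; rewrite (mem_rem_uniq _ us) inE (fs x (hf x hx)) andbT.
  by apply: contraPneq hw => <-.
- have ws := fs w fw.
  by rewrite size_rem // -ltnS prednK //; case: (s) ws.
by exists g; split => // x /gh /hf.
Qed.

Lemma minimal_circuit g : I g -> (exists v, supp g v) -> minimal_in I g ->
  is_circuit (underM I) (supp g).
Proof.
move=> Ig ne gmin; split=> [indep|D Dg /dependent_witness [f [If ne' fD]] x gx].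
  exact: (indep g Ig ne).
exact/fD/(gmin f If ne' (fun y fy => Dg y (fD y fy))).
Qed.

Lemma circuit_supp (C : zset n) : is_circuit (underM I) C -> exists g, I g /\ C = supp g.
Proof.
move=> [depC minC]; have [g [Ig ne gC]] := dependent_witness depC.
exists g; split => //; apply: zset_ext => x; split; last exact: gC.
by apply: (minC _ gC) => indep; apply: (indep g Ig ne).
Qed.

Lemma trop_circuit_ideal : I = circuit_ideal (underM I).
Proof.
apply: functional_extensionality => f; apply: propositional_extensionality; split.
  move=> If; split => [|u fu]; first exact: trop_laurent If.
  have [g [Ig gu gf gmin]] := trop_min If fu.
  by exists (supp g); split => //; apply: minimal_circuit => //; exists u.
case=> laur_f cover; apply: ideal_cover (proj1 HI) laur_f _ => u /cover [C [Ccirc Cu Cf]].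
by have [g [Ig Cg]] := circuit_supp Ccirc; exists g; rewrite -Cg.
Qed.

End TropicalIdealCircuits.

Section CircuitIdeal.
Variables (n : nat) (M : zset n -> Prop).
Hypothesis HM : is_finitary_matroid M.

Lemma circuit_ideal_elim f g u v : circuit_ideal M f -> circuit_ideal M g ->
  supp g u -> supp f v -> ~ supp g v ->
  exists c, [/\ uniq c, is_circuit M (seq_set c), v \in c &
     forall x, x \in c -> (supp f x \/ supp g x) /\ x <> u].
Proof.
move=> [_ cover_f] [_ cover_g] gu fv gv.
have [C1 [circ1 c1v c1f]] := cover_f v fv; have [c1 [uc1 C1E]] := circuit_seq HM circ1.
subst C1.
case: (boolP (u \in c1)) => c1u; last first.
  exists c1; split => // x xc; split; first by left; apply: c1f.
  by move=> xu; move: c1u; rewrite -xu xc.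
have [C2 [circ2 c2u c2g]] := cover_g u gu; have [c2 [uc2 C2E]] := circuit_seq HM circ2.
subst C2.
have vc2 : v \notin c2 by apply/negP => /c2g.
have [c [uc circ vc c12]] := strong_elim HM uc1 uc2 circ1 circ2 c1u c2u c1v vc2.
by exists c; split => // x /c12 [[/c1f fx|/c2g gx] xu]; split => //; [left | right].
Qed.

Hypothesis invM : zinvariant M.

Lemma circuit_tr (C : zset n) u : is_circuit M C ->
  is_circuit M (translate u C).
Proof.
move=> [depC minC]; split; first by move=> /(proj1 (invM u C)).
move=> D DC depD; rewrite -[D](translateK (- u)) opprK; apply: translate_sub.
apply: minC; first by rewrite -(translateK u C); apply: translate_sub.
by move=> /(proj1 (invM (- u) D)).
Qed.

Lemma circuit_ideal_ideal : is_ideal (circuit_ideal M).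
Proof.
split.
- by move=> f [].
- by split => [|u []]; first by exists [::] => u [].
- move=> f g [[sf fs] cover_f] [[sg gs] cover_g]; split.
    exists (sf ++ sg) => u /supp_padd; rewrite mem_cat.
    by case=> [/fs|/gs] ->; rewrite ?orbT.
  move=> u /supp_padd [/cover_f|/cover_g] [C [circ Cu Csupp]]; exists C; split => //.
    by move=> x /Csupp fx; apply/supp_padd; left.
  by move=> x /Csupp gx; apply/supp_padd; right.
- move=> f g [[sf fs] cover_f] [sg gs]; split.
    exists [seq a + b | a <- sg, b <- sf] => w /supp_pmul [a [b [<- ga fb]]].
    by apply: allpairs_f; [apply: gs | apply: fs].
  move=> w /supp_pmul [a [b [<- ga fb]]]; have [C [circ Cb Cf]] := cover_f b fb.
  exists (translate a C); split; first exact: circuit_tr.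
    by rewrite /translate addrC addKr.
  move=> x Cx; apply/supp_pmul; exists a, (x - a); split => //; last exact: Cf.
  by rewrite addrC subrK.
Qed.

Lemma circuit_ideal_trop : is_tropical_ideal (circuit_ideal M).
Proof.
split; first exact: circuit_ideal_ideal.
move=> f g u If Ig fu gu.
pose P v := exists c, [/\ uniq c, is_circuit M (seq_set c), v \in c &
   forall x, x \in c -> (supp f x \/ supp g x) /\ x <> u].
exists (indicator P); split.
- case: If => [[sf fs] _]; case: Ig => [[sg gs] _]; split.
    exists (sf ++ sg) => v /(supp_indicator P) [c [_ _ vc c_fg]]; rewrite mem_cat.
    by case: (c_fg v vc) => [[/fs|/gs] -> _]; rewrite ?orbT.
  move=> v /(supp_indicator P) [c [uc circ vc c_fg]]; exists (seq_set c); split => // x xc.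
  by apply/(supp_indicator P); exists c.
- move=> v [[fv gv]|[gv fv]]; apply/(supp_indicator P); first exact: circuit_ideal_elim.
  have [c [uc circ vc c_gf]] := circuit_ideal_elim Ig If fu gv fv.
  by exists c; split => // x /c_gf [gfx xu]; split => //; case: gfx; [right | left].
- by move=> v /(supp_indicator P) [c [_ _ vc c_fg]]; apply: c_fg.
Qed.

End CircuitIdeal.

Lemma underM_circuit_ideal n (M : zset n -> Prop) : is_finitary_matroid M ->
  underM (circuit_ideal M) = M.
Proof.
move=> HM; apply: functional_extensionality => A; apply: propositional_extensionality.
split=> [indepA|MA f [_ cover_f] [u fu] fA]; last first.
  have [C [circ Cu Cf]] := cover_f u fu.
  by apply: (circuit_dep circ); apply: fm_sub MA => // x /Cf /fA.
case: (HM) => _ _ _; apply => s sA; apply: NNPP => dep_s.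
have [c [uc cs circ]] := dep_circuit HM dep_s.
apply: (indepA (indicator (seq_set c))).
- split; first by exists c => x /(supp_indicator (seq_set c)).
  move=> u /(supp_indicator (seq_set c)) uc'; exists (seq_set c); split => // x xc.
  exact/(supp_indicator (seq_set c)).
- case: c {uc cs} circ => [circ|x c _]; first by case: (circuit_dep circ); apply: fm_empty.
  by exists x; apply/(supp_indicator (seq_set _)); rewrite /seq_set mem_head.
- by move=> x /(supp_indicator (seq_set c)) /cs; apply: sA.
Qed.

Lemma rank_uniq n (M : zset n -> Prop) (A : zset n) k1 k2 :
  rank_of M A k1 -> rank_of M A k2 -> k1 = k2.
Proof.
move=> [[s1 [u1 <- S1 M1]] max1] [[s2 [u2 <- S2 M2]] max2].
by apply/eqP; rewrite eqn_leq max2 // max1.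
Qed.

Lemma rank_of_tr n (M : zset n -> Prop) (A : zset n) k u : zinvariant M ->
  rank_of M A k -> rank_of M (translate u A) k.
Proof.
move=> invM [[s [us <- sA Ms]] maxA]; split.
  exists [seq x + u | x <- s]; rewrite uniq_translate size_map seq_set_translate.
  by split => //; [apply: translate_sub | apply/(invM u)].
move=> t ut tA Mt; have := maxA [seq x + - u | x <- t].
rewrite size_map uniq_translate seq_set_translate; apply => //.
  by rewrite -(translateK u A); apply: translate_sub.
exact/(invM (- u)).
Qed.

Lemma hyp_inv n (M : zset n -> Prop) : zinvariant M -> zinvariant (hyperplanes M).
Proof.
move=> invM; apply: zinv_of => u H [r [rankM [rankH maxH]]].
exists r; split => //; split; first exact: rank_of_tr.
move=> H' HH' rankH' x H'x.
have /maxH /(_ (rank_of_tr (- u) invM rankH') (x - u)) : zsubset H (translate (- u) H').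
  by rewrite -(translateK u H); apply: translate_sub.
by rewrite /translate opprK subrK; apply.
Qed.

Local Close Scope ring_scope.

Section RankHyperplanes.
Variables (n : nat) (M : zset n -> Prop) (d : nat).
Hypothesis HM : is_finitary_matroid M.
Hypothesis rankM : matroid_rank M d.+1.

Lemma rank_bound (s : seq (Zn n)) : uniq s -> M (seq_set s) -> (size s <= d.+1)%N.
Proof. by move=> us Ms; case: rankM => _; apply. Qed.

Lemma hyp_rank (H : zset n) : hyperplanes M H ->
  rank_of M H d /\ forall H', zsubset H H' -> rank_of M H' d -> zsubset H' H.
Proof. by move=> [r [rankM' rankH]]; rewrite (rank_uniq rankM' rankM) in rankH. Qed.

Lemma hyp_of (H : zset n) : rank_of M H d ->
  (forall H', zsubset H H' -> rank_of M H' d -> zsubset H' H) -> hyperplanes M H.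
Proof. by move=> rankH maxH; exists d.+1. Qed.

Definition closure (s : seq (Zn n)) : zset n := fun x => x \in s \/ ~ M (seq_set (x :: s)).

Lemma closure_rank (s : seq (Zn n)) : uniq s -> size s = d -> M (seq_set s) ->
  rank_of M (closure s) d.
Proof.
move=> us sz Ms; split; first by exists s; split => // x xs; left.
move=> t ut tcl Mt; rewrite leqNgt; apply/negP; rewrite -sz => lt.
have [x [xt xs Mx]] := fm_aug HM us ut Ms Mt lt.
by case: (tcl x xt) => [xs'|]; [move: xs; rewrite xs' | apply].
Qed.

Lemma rank_sub_closure (s : seq (Zn n)) (H : zset n) : uniq s -> size s = d ->
  zsubset (seq_set s) H -> rank_of M H d -> zsubset H (closure s).
Proof.
move=> us sz sH [_ maxH] x Hx; case: (boolP (x \in s)) => xs; [by left | right => Mx].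
have /maxH : uniq (x :: s) by rewrite /= xs us.
by move=> /(_ (seq_set_cons_sub Hx sH) Mx); rewrite /= sz ltnn.
Qed.

Lemma closure_hyp (s : seq (Zn n)) : uniq s -> size s = d -> M (seq_set s) ->
  hyperplanes M (closure s).
Proof.
move=> us sz Ms; apply: (hyp_of (closure_rank us sz Ms)) => H' clH' rankH'.
by apply: rank_sub_closure rankH' => // x xs; apply: clH'; left.
Qed.

Lemma closure_unique (s : seq (Zn n)) (H : zset n) : uniq s -> size s = d -> M (seq_set s) ->
  hyperplanes M H -> zsubset (seq_set s) H -> H = closure s.
Proof.
move=> us sz Ms /hyp_rank [rankH maxH] sH.
have Hcl := rank_sub_closure us sz sH rankH.
apply: zset_ext => x; split; first exact: Hcl.
exact: maxH _ Hcl (closure_rank us sz Ms) x.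
Qed.

(* A matroid of rank d+1 >= 2 has two distinct hyperplanes: the closures of
   two d-subsets of a basis. *)
Lemma two_hyperplanes : (0 < d)%N ->
  exists H1 H2, [/\ hyperplanes M H1, hyperplanes M H2 & H1 <> H2].
Proof.
move=> d0; have [[b [ub szb _ Mb]] _] := rankM.
case: b ub szb Mb => [|x [|y r]] //= ub [szr] Mb; first by move: d0; rewrite -szr.
case/and3P: ub; rewrite inE negb_or => /andP [xy xr] yr ur.
have sub1 : {subset y :: r <= [:: x, y & r]} by move=> z zr; rewrite inE zr orbT.
have sub2 : {subset x :: r <= [:: x, y & r]}.
  by move=> z; rewrite !inE => /predU1P [->|->]; rewrite ?eqxx ?orbT.
have M1 := fm_subs HM sub1 Mb; have M2 := fm_subs HM sub2 Mb.
have u1 : uniq (y :: r) by rewrite /= yr ur.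
have u2 : uniq (x :: r) by rewrite /= xr ur.
exists (closure (y :: r)), (closure (x :: r)); split; [exact: closure_hyp|exact: closure_hyp|].
move=> E; have [_ maxcl] := closure_rank u1 szr M1.
have : (size [:: x, y & r] <= d)%N.
  apply: maxcl => //; first by rewrite /= inE negb_or xy xr yr ur.
  by apply: seq_set_cons_sub => [|z zr]; [rewrite E; left; apply: mem_head | left].
by rewrite /= szr ltnn.
Qed.

Definition paving_circ := forall C, is_circuit M C -> has_card C d.+1 \/ has_card C d.+2.

Lemma has_card_le (C : zset n) k (s : seq (Zn n)) : has_card C k ->
  zsubset C (seq_set s) -> (k <= size s)%N.
Proof. by move=> [w [uw <- wC]] Cs; apply: uniq_leq_size => // x /wC /Cs. Qed.

Hypothesis paving : paving_circ.

Lemma pav_small (s : seq (Zn n)) : uniq s -> (size s <= d)%N -> M (seq_set s).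
Proof.
move=> us sz; apply: NNPP => /(dep_circuit HM) [c [uc cs circ]].
have cs' : zsubset (seq_set c) (seq_set s) by move=> x /cs.
case: (paving circ) => /has_card_le /(_ cs') le.
  by have := leq_trans le sz; rewrite ltnn.
by have := leq_trans (ltnW le) sz; rewrite ltnn.
Qed.

(* The hyperplanes of a paving matroid of rank d+1 (d >= 1) form a d-partition:
   every d-set is independent and lies in exactly one hyperplane, its closure. *)
Lemma paving_dpart : (0 < d)%N -> d_partition d (hyperplanes M).
Proof.
move=> d0; have [[b [ub szb _ _]] _] := rankM; split.
- by exists b.
- exact: two_hyperplanes.
- by move=> H /hyp_rank [[[s [us sz sH _]] _] _]; exists s.
- move=> s us sz; have Ms : M (seq_set s) by apply: pav_small us _; rewrite sz.
  exists (closure s); split; first exact: closure_hyp.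
    by move=> x xs; left.
  by move=> B' HB' sB'; apply: closure_unique.
Qed.

(* A circuit with d+1 points lies in a hyperplane: the closure of d of them. *)
Lemma small_circuit_hyp (c : seq (Zn n)) : uniq c -> size c = d.+1 ->
  is_circuit M (seq_set c) -> exists2 H, hyperplanes M H & zsubset (seq_set c) H.
Proof.
case: c => [//|x c] uc [sz] circ; case/andP: (uc) => xc uc'.
have Mc : M (seq_set c) by have := circuit_rem uc circ (mem_head x c); rewrite /= eqxx.
exists (closure c); first exact: closure_hyp.
by apply: seq_set_cons_sub => [|y yc]; [right; apply: circuit_dep | left].
Qed.

Definition block_matroid (P : zset n -> Prop) : zset n -> Prop := fun A =>
  forall s : seq (Zn n), uniq s -> zsubset (seq_set s) A ->
    (size s <= d.+1)%N /\ (size s = d.+1 -> forall B, P B -> ~ zsubset (seq_set s) B).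

Lemma pav_char (A : zset n) : M A <-> block_matroid (hyperplanes M) A.
Proof.
split=> [MA s us sA|blockA].
  have Ms : M (seq_set s) by apply: fm_sub MA.
  split => [|sz B /hyp_rank [[_ maxB] _] sB]; first exact: rank_bound.
  by have := maxB s us sB Ms; rewrite sz ltnn.
case: (HM) => _ _ _; apply => s sA; apply: NNPP => /(dep_circuit HM) [c [uc cs circ]].
have [le_c no_block] := blockA c uc (fun x xc => sA x (cs x xc)).
have cc : zsubset (seq_set c) (seq_set c) by [].
have sz : size c = d.+1.
  apply/eqP; rewrite eqn_leq le_c.
  case: (paving circ) => /has_card_le /(_ cc) // le.
  by have := leq_trans le le_c; rewrite ltnn.
by have [H HH cH] := small_circuit_hyp uc sz circ; apply: (no_block sz H HH cH).
Qed.

End RankHyperplanes.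

Section BlockMatroid.
Variables (n d : nat) (P : zset n -> Prop).
Hypothesis HP : d_partition d P.

Lemma block_of (s : seq (Zn n)) : uniq s -> size s = d ->
  exists B, [/\ P B, zsubset (seq_set s) B &
    forall B', P B' -> zsubset (seq_set s) B' -> B' = B].
Proof. by case: HP => _ _ _; apply. Qed.

Lemma block_base (B : zset n) : P B ->
  exists s : seq (Zn n), [/\ uniq s, size s = d & zsubset (seq_set s) B].
Proof. by case: HP => _ _ base _; apply: base. Qed.

Lemma block_unique (s : seq (Zn n)) (B1 B2 : zset n) : uniq s -> size s = d ->
  P B1 -> P B2 -> zsubset (seq_set s) B1 -> zsubset (seq_set s) B2 -> B1 = B2.
Proof.
move=> us sz P1 P2 S1 S2; have [B [_ _ uniqB]] := block_of us sz.
by rewrite (uniqB _ P1 S1) (uniqB _ P2 S2).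
Qed.

Lemma block_small (s : seq (Zn n)) : uniq s -> (size s <= d)%N -> block_matroid d P (seq_set s).
Proof.
move=> us sz t ut ts; have le : (size t <= size s)%N by apply: uniq_leq_size => // y /ts.
split=> [|e]; first exact: leq_trans le (leq_trans sz (leqnSn d)).
by have := leq_trans le sz; rewrite e ltnn.
Qed.

Lemma block_ext (s : seq (Zn n)) (B : zset n) x : uniq s -> size s = d -> P B ->
  zsubset (seq_set s) B -> ~ B x -> x \notin s /\ block_matroid d P (seq_set (x :: s)).
Proof.
move=> us sz PB sB Bx; have xs : x \notin s by apply/negP => /sB.
split => // t ut ts.
have le : (size t <= size (x :: s))%N by apply: uniq_leq_size => // y /ts.
split=> [|st B' PB' tB']; first by rewrite /= sz in le.
have ge : (size (x :: s) <= size t)%N by rewrite st /= sz.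
have [_ t_eq] := uniq_min_size ut (fun y (yt : y \in t) => ts y yt) ge.
have sB' : zsubset (seq_set s) B' by move=> y ys; apply: tB'; rewrite /seq_set t_eq inE ys orbT.
rewrite (block_unique us sz PB PB' sB sB') in Bx.
by apply: Bx; apply: tB'; rewrite /seq_set t_eq mem_head.
Qed.

(* The block matroid of a d-partition is a finitary matroid; augmentation of
   a d-set uses a point outside its block. *)
Lemma block_matroidP : is_finitary_matroid (block_matroid d P).
Proof.
split.
- by exists (seq_set [::]); apply: block_small.
- by move=> A B AB blockB s us sA; apply: blockB => // x /sA /AB.
- move=> s t us ut blocks blockt lt; have [le_t no_block] := blockt t ut (fun x xt => xt).
  have le_s : (size s <= d)%N by rewrite -ltnS (leq_trans lt le_t).
  case: (ltngtP (size s) d) => [sd|sd|sd].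
  + have [x [xt xs]] := exists_notin ut lt.
    by exists x; split => //; apply: block_small; rewrite /= ?xs ?us.
  + by have := leq_trans sd le_s; rewrite ltnn.
  + have [B [PB sB _]] := block_of us sd.
    have et : size t = d.+1 by apply/eqP; rewrite eqn_leq le_t -sd.
    have [x [xt Bx]] : exists x, x \in t /\ ~ B x.
      apply: NNPP => none; apply: (no_block et B PB) => x xt.
      by apply: NNPP => Bx; apply: none; exists x.
    by have [xs blockx] := block_ext us sd PB sB Bx; exists x.
- by move=> A finA s us sA; apply: (finA s sA s us).
Qed.

Lemma block_inv : zinvariant P -> zinvariant (block_matroid d P).
Proof.
move=> invP; apply: zinv_of => u A blockA s us sA.
pose s' := [seq (x - u)%R | x <- s].
have sA' : zsubset (seq_set s') A.
  by rewrite seq_set_translate -(translateK u A); apply: translate_sub.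
have us' : uniq s' by rewrite uniq_translate.
have [le no_block] := blockA s' us' sA'; rewrite size_map in le no_block.
split => // sz B PB sB; apply: (no_block sz (translate (- u)%R B)); first exact/(invP (- u)%R).
by rewrite seq_set_translate; apply: translate_sub.
Qed.

(* Two distinct blocks give a d-set plus an outside point: rank d+1. *)
Lemma block_rank_full : matroid_rank (block_matroid d P) d.+1.
Proof.
split=> [|s us _ blocks]; last by case: (blocks s us (fun x xs => xs)).
have [B [B' [x [PB PB' B'x Bx]]]] : exists B B' x, [/\ P B, P B', B' x & ~ B x].
  case: (HP) => _ [B1 [B2 [P1 P2 ne]]] _ _.
  apply: NNPP => none; apply: ne; apply: zset_ext => x; split => Bx.
    by apply: NNPP => B2x; apply: none; exists B2, B1, x.
  by apply: NNPP => B1x; apply: none; exists B1, B2, x.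
have [s [us sz sB]] := block_base PB; have [xs blockx] := block_ext us sz PB sB Bx.
by exists (x :: s); split; rewrite /= ?xs ?sz.
Qed.

(* Circuits of the block matroid: (d+1)-sets inside a block, or (d+2)-sets. *)
Lemma block_paving : paving_circ (block_matroid d P) d.
Proof.
move=> C circ; have [c [uc Cc]] := circuit_seq block_matroidP circ; subst C.
have card t : uniq t -> {subset t <= c} -> ~ block_matroid d P (seq_set t) ->
    has_card (seq_set c) (size t).
  case: circ => _ minC ut tc dep_t; have ct := minC _ (fun x xt => tc x xt) dep_t.
  by exists t; split => // x; split; [apply: ct | apply: tc].
have [t [ut tc bad_t]] : exists t : seq (Zn n), [/\ uniq t, {subset t <= c} &
    ~ ((size t <= d.+1)%N /\ (size t = d.+1 -> forall B, P B -> ~ zsubset (seq_set t) B))].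
  apply: NNPP => none; apply: (circuit_dep circ) => t ut tc.
  by apply: NNPP => good; apply: none; exists t; split => // x /tc.
case: (leqP (size t) d.+1) => st.
  have sz : size t = d.+1 by apply: NNPP => ne; apply: bad_t; split => // /ne.
  left; rewrite -sz; apply: card => // block_t; apply: bad_t.
  by split => //; have [] := block_t t ut (fun x xt => xt).
right; have ut' := take_uniq d.+2 ut.
have st' : size (take d.+2 t) = d.+2 by rewrite size_takel.
rewrite -st'; apply: card => // [x /mem_take /tc //|block_t].
by have [] := block_t _ ut' (fun x xt => xt); rewrite st' ltnn.
Qed.

Lemma block_rank (B : zset n) : P B -> rank_of (block_matroid d P) B d.
Proof.
move=> PB; split.
  have [s [us sz sB]] := block_base PB; exists s; split => //.
  by apply: block_small; rewrite ?sz.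
move=> t ut tB blockt; have [le no_block] := blockt t ut (fun x xt => xt).
rewrite -ltnS; case: (ltngtP (size t) d.+1) => // [gt|e].
  by move: (leq_trans gt le); rewrite ltnn.
by case: (no_block e B PB tB).
Qed.

Lemma rank_sub_block (H B : zset n) (s : seq (Zn n)) : uniq s -> size s = d -> P B ->
  zsubset (seq_set s) B -> zsubset (seq_set s) H -> rank_of (block_matroid d P) H d ->
  zsubset H B.
Proof.
move=> us sz PB sB sH [_ maxH] x Hx; apply: NNPP => Bx.
have [xs blockx] := block_ext us sz PB sB Bx.
have /maxH : uniq (x :: s) by rewrite /= xs us.
by move=> /(_ (seq_set_cons_sub Hx sH) blockx); rewrite /= sz ltnn.
Qed.

Lemma block_hyperplanes : hyperplanes (block_matroid d P) = P.
Proof.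
have rankM := block_rank_full.
apply: functional_extensionality => H; apply: propositional_extensionality.
split=> [/(hyp_rank rankM) [rankH maxH]|PH].
  have [[s [us sz sH _]] _] := rankH; have [B [PB sB _]] := block_of us sz.
  have HB := rank_sub_block us sz PB sB sH rankH.
  suff -> : H = B by [].
  by apply: zset_ext => x; split => [/HB|]; last exact: maxH _ HB (block_rank PB) x.
apply: (hyp_of rankM (block_rank PH)) => H' HH' rankH'.
have [t [ut tz tH]] := block_base PH.
exact: rank_sub_block ut tz PH tH (fun x xt => HH' x (tH x xt)) rankH'.
Qed.

End BlockMatroid.

Theorem mainTheorem3 (n : nat) :
  ((forall I : Bcoef n -> Prop, is_tropical_ideal I ->
       is_finitary_matroid (underM I) /\ zinvariant (underM I)) /\
   (forall I J : Bcoef n -> Prop, is_tropical_ideal I -> is_tropical_ideal J ->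
       underM I = underM J -> I = J) /\
   (forall M : zset n -> Prop, is_finitary_matroid M -> zinvariant M ->
       exists I, is_tropical_ideal I /\ underM I = M)) /\
  (forall d : nat, (0 < d)%N ->
   (forall I : Bcoef n -> Prop, paving_tropical_ideal I d.+1 ->
       d_partition d (hyperplanes (underM I)) /\
       zinvariant (hyperplanes (underM I))) /\
   (forall I J : Bcoef n -> Prop,
       paving_tropical_ideal I d.+1 -> paving_tropical_ideal J d.+1 ->
       hyperplanes (underM I) = hyperplanes (underM J) -> I = J) /\
   (forall P : zset n -> Prop, d_partition d P -> zinvariant P ->
       exists I, paving_tropical_ideal I d.+1 /\ hyperplanes (underM I) = P)).
Proof.
have inj : forall I J : Bcoef n -> Prop, is_tropical_ideal I -> is_tropical_ideal J ->
    underM I = underM J -> I = J.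
  by move=> I J HI HJ IJ; rewrite (trop_circuit_ideal HI) (trop_circuit_ideal HJ) IJ.
split; first split; [|split => //|].
- by move=> I HI; split; [exact: trop_matroid | exact: trop_inv].
- move=> M HM invM; exists (circuit_ideal M).
  by split; [exact: circuit_ideal_trop | exact: underM_circuit_ideal].
move=> d d0; split; [|split].
- move=> I [[HI rankI] pavI]; split; last exact: hyp_inv (trop_inv HI).
  exact: paving_dpart (trop_matroid HI) rankI pavI d0.
- move=> I J [[HI rankI] pavI] [[HJ rankJ] pavJ] hypIJ; apply: inj => //.
  apply: functional_extensionality => A; apply: propositional_extensionality.
  rewrite (pav_char (trop_matroid HI) rankI pavI A).
  by rewrite (pav_char (trop_matroid HJ) rankJ pavJ A) hypIJ.
- move=> P HP invP; pose M := block_matroid d P; exists (circuit_ideal M).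
  have HM : is_finitary_matroid M := block_matroidP HP.
  have underM_M : underM (circuit_ideal M) = M := underM_circuit_ideal HM.
  rewrite /paving_tropical_ideal /zero_dim_tropical underM_M block_hyperplanes //.
  split => //; split; last exact: block_paving.
  by split; [exact: circuit_ideal_trop HM (block_inv d invP) | exact: block_rank_full].
Qed.
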